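(* Let $n,x$ be integers with $1<x<n$, so that $G=C_{2n}(x,1,n)$ is a $5$-regular circulant graph. If $n\equiv 1 \pmod 3$, $x\equiv 2\pmod 3$ and $2<x<\tfrac{n}{2}$, then $G$ is word-representable.
   Context: Two distinct letters $x,y$ alternate in a word $w$ if, after deleting all other letters from $w$, the resulting word is of the form $xyxy\cdots$ or $yxyx\cdots$ (of even or odd length). A graph $G=(V,E)$ is word-representable if there is a word $w$ over the alphabet $V$, containing every letter of $V$ at least once, such that for all distinct $x,y\in V$, $xy\in E$ if and only if $x$ and $y$ alternate in $w$. For an integer $m$ and a set $R$ of positive integers each at most $m/2$, the circulant graph $C_m(R)$ has vertex set $\{0,1,\dots,m-1\}$, with $i$ and $j$ adjacent iff $\min(|i-j|,\,m-|i-j|)\in R$. $C_{2n}(x,1,n)$ denotes the circulant graph on $2n$ vertices with jump set $\{1,x,n\}$; it is $5$-regular exactly when $1<x<n$. *)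

From mathcomp Require Import all_boot all_order.
Set Implicit Arguments. Unset Strict Implicit. Unset Printing Implicit Defensive.

Definition restrict (T : eqType) (x y : T) (w : seq T) : seq T :=
  [seq z <- w | (z == x) || (z == y)].

Definition alt_word (T : eqType) (x y : T) (u : seq T) : Prop :=
  (u = [seq (if odd i then y else x) | i <- iota 0 (size u)]) \/
  (u = [seq (if odd i then x else y) | i <- iota 0 (size u)]).

Definition alternate (T : eqType) (x y : T) (w : seq T) : Prop :=
  alt_word x y (restrict x y w).

(* A graph on a finite vertex type V with adjacency relation E (assumed
   symmetric and irreflexive) is word-representable. *)
Definition word_representable (V : finType) (E : V -> V -> bool) : Prop :=
  exists w : seq V,
    (forall v : V, v \in w) /\
    (forall a b : V, a != b -> (E a b <-> alternate a b w)).

Definition cdist (m i j : nat) : nat :=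
  let d := if i <= j then j - i else i - j in minn d (m - d).

Definition circulant (m : nat) (R : pred nat) : 'I_m -> 'I_m -> bool :=
  fun i j => (i != j) && R (cdist m i j).

Arguments circulant m R : clear implicits.

Definition C2n (n x : nat) : 'I_(2 * n)%N -> 'I_(2 * n)%N -> bool :=
  circulant (2 * n)%N (fun d => (d == 1) || (d == x) || (d == n)).
Arguments C2n n x : clear implicits.

From mathcomp Require Import all_boot all_order zify.
Set Implicit Arguments. Unset Strict Implicit. Unset Printing Implicit Defensive.

(* A graph with a proper 3-colouring is word-representable: list the vertices
   by colour, then append, for every non-edge pq, a block that restricts to abab
   on every edge ab (col a < col b) but contains a square on {p, q}.
   C_2n(1, x, n) is properly 3-coloured by i |-> (i + floor(K i / 2n)) mod 3
   as soon as K = 1 (mod 6), K < 2n and floor(K x / 2n) = 2 (mod 3); when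
   2x < n such a K is found among the multipliers placing K x in a suitable
   window of multiples of 2n. *)

Section Alternation.
Variable T : eqType.
Implicit Types (a b : T) (s u : seq T).

Lemma restrictC a b s : restrict a b s = restrict b a s.
Proof. by apply: eq_filter => z; rewrite orbC. Qed.

Lemma restrict_cat a b s1 s2 :
  restrict a b (s1 ++ s2) = restrict a b s1 ++ restrict a b s2.
Proof. exact: filter_cat. Qed.

Lemma restrict_flatten a b (ss : seq (seq T)) :
  restrict a b (flatten ss) = flatten [seq restrict a b s | s <- ss].
Proof. exact: filter_flatten. Qed.

Lemma restrict_filter a b (P : pred T) s :
  restrict a b [seq v <- s | P v] = [seq v <- restrict a b s | P v].
Proof. by rewrite /restrict -!filter_predI; apply: eq_filter => z /=; rewrite andbC. Qed.

Lemma restrict_uniq a b s : uniq s -> a \in s -> b \in s -> a != b ->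
  restrict a b s = [:: a; b] \/ restrict a b s = [:: b; a].
Proof.
move=> s_uniq sa sb ab.
have r_uniq : uniq (restrict a b s) by exact: filter_uniq.
have r_mem : restrict a b s =i [:: a; b].
  by move=> z; rewrite mem_filter !inE andb_idr // => /orP [] /eqP ->.
have ab_uniq : uniq [:: a; b] by rewrite /= inE ab.
have := perm_size (uniq_perm r_uniq ab_uniq r_mem).
move: r_uniq r_mem; case: (restrict a b s) => [|u [|v []]] //=.
rewrite inE andbT => uv r_mem _.
have := r_mem v; have := r_mem u; rewrite !inE !eqxx ?orbT /=.
by move=> /esym/orP [] /eqP ? /esym/orP [] /eqP ?; subst; rewrite ?eqxx in uv; auto.
Qed.

Lemma alt_wordC a b u : alt_word a b u -> alt_word b a u.
Proof. by case=> ?; [right | left]. Qed.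

Lemma flatten_nseq_pair a b n :
  flatten (nseq n [:: a; b]) = [seq if odd i then b else a | i <- iota 0 (2 * n)].
Proof.
elim: n => [|n IHn] //; rewrite mulnS /= IHn -(addn0 2) iotaDl -map_comp.
by congr [:: _, _ & _]; apply: eq_map => i /=; rewrite negbK.
Qed.

Lemma alt_word_nseq a b n : alt_word a b (flatten (nseq n [:: a; b])).
Proof. by left; rewrite flatten_nseq_pair size_map size_iota. Qed.

Definition has_square s := exists s1 s2 z, s = s1 ++ z :: z :: s2.

Lemma has_square_cat l s r : has_square s -> has_square (l ++ s ++ r).
Proof. by case=> s1 [s2 [z ->]]; exists (l ++ s1), (s2 ++ r), z; rewrite -!catA. Qed.

Lemma has_square_flatten (ss : seq (seq T)) s :
  s \in ss -> has_square s -> has_square (flatten ss).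
Proof. by case/splitPr=> ss1 ss2 /(has_square_cat (flatten ss1) (flatten ss2)); rewrite flatten_cat. Qed.

Lemma alt_word_no_square a b u : a != b -> has_square u -> ~ alt_word a b u.
Proof.
move=> ab [s1 [s2 [z ->]]]; set w := s1 ++ _.
suff no_square (f : nat -> T) : (forall i, f i.+1 != f i) ->
    w <> [seq f i | i <- iota 0 (size w)].
  by case; apply: no_square => i /=; case: odd; rewrite //= eq_sym.
move=> f_step /(congr1 (drop (size s1))).
rewrite -map_drop drop_iota drop_size_cat // /w size_cat addKn add0n /=.
by case=> e1 e2 _; move: (f_step (size s1)); rewrite -e1 -e2 eqxx.
Qed.

Lemma alt_word_pair_blocks a b (ss : seq (seq T)) :
  all (pred1 [:: a; b; a; b]) ss -> alt_word a b ([:: a; b] ++ flatten ss).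
Proof.
move=> abab.
suff [n ->] : exists n, [:: a; b] ++ flatten ss = flatten (nseq n [:: a; b]).
  exact: alt_word_nseq.
elim: ss abab => [|s ss IHss]; first by exists 1.
by case/andP=> /eqP -> /IHss [n e]; exists n.+2; rewrite /= -e.
Qed.

End Alternation.

Section KeySort.
Variables (V : finType) (key : V -> nat).

Definition key_sort := sort (relpre key leq) (enum V).

Lemma mem_key_sort v : v \in key_sort.
Proof. by rewrite mem_sort mem_enum. Qed.

Lemma restrict_key_sort a b : key a < key b -> restrict a b key_sort = [:: a; b].
Proof.
move=> lt_ab; have ab : a != b by apply: contraTneq lt_ab => ->; rewrite ltnn.
rewrite [LHS]filter_sort -/(restrict a b (enum V)); last 2 first.
- by move=> u v; apply: leq_total.
- by move=> v u w /= /leq_trans; apply.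
have [-> | ->] := restrict_uniq (enum_uniq V) (mem_enum V a) (mem_enum V b) ab.
  by rewrite /sort /= ltnW.
by rewrite /sort /= leqNgt lt_ab.
Qed.

Lemma restrict_filter_key_sort (P : pred V) a b : key a < key b ->
  restrict a b [seq v <- key_sort | P v] = [seq v <- [:: a; b] | P v].
Proof. by move=> lt_ab; rewrite restrict_filter restrict_key_sort. Qed.

End KeySort.

Section Blocks.
Variables (V : finType) (col : V -> nat).
Implicit Types (a b p q : V).

Definition far_block p q :=
  [seq v <- key_sort col | v != q] ++ [:: p; q] ++ [seq v <- key_sort col | v != p].

Lemma restrict_far_block_edge p q a b :
  (forall v, col p <= col v <= col q) -> col a < col b ->
  ~~ ((a \in [:: p; q]) && (b \in [:: p; q])) ->
  restrict a b (far_block p q) = [:: a; b; a; b].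
Proof.
move=> bounds lt_ab not_pq.
have aq : a != q by apply: contraTneq lt_ab => ->; rewrite -leqNgt; case/andP: (bounds b).
have bp : b != p by apply: contraTneq lt_ab => ->; rewrite -leqNgt; case/andP: (bounds a).
rewrite /far_block !restrict_cat !restrict_filter_key_sort //= aq bp /restrict /=.
rewrite (eq_sym p a) (eq_sym p b) (eq_sym q a) (eq_sym q b) (negbTE bp) (negbTE aq) /=.
have [ap | ap] := eqVneq a p; have [bq | bq] := eqVneq b q; subst => //=.
by rewrite !inE !eqxx orbT in not_pq.
Qed.

Lemma restrict_far_block p q :
  col p < col q -> restrict p q (far_block p q) = [:: p; p; q; q].
Proof.
move=> lt_pq; have pq : p != q by apply: contraTneq lt_pq => ->; rewrite ltnn.
by rewrite /far_block !restrict_cat !restrict_filter_key_sort // /restrict /= !eqxx (eq_sym q p) (negbTE pq).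
Qed.

(* Sorting by this key lists the vertices other than p, q by colour and inserts
   u, then the other one of p, q, between colours < col q and colours >= col q. *)
Definition pair_key p q u v :=
  if v == u then 3 * col q else if v \in [:: p; q] then (3 * col q).+1 else (3 * col v).+2.

Definition near_block p q := key_sort (pair_key p q p) ++ key_sort (pair_key p q q).

Lemma pair_key_lt p q u a b :
  u \in [:: p; q] -> col p <= col q <= (col p).+1 -> col a < col b ->
  ~~ ((a \in [:: p; q]) && (b \in [:: p; q])) ->
  pair_key p q u a < pair_key p q u b.
Proof.
move=> u_pq bounds lt_ab not_pq.
have col_pq v : v \in [:: p; q] -> col p <= col v <= col q.
  by rewrite !inE => /orP [] /eqP ->; lia.
have key_cases v : v \in [:: p; q] /\ 3 * col q <= pair_key p q u v <= (3 * col q).+1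
                \/ pair_key p q u v = (3 * col v).+2.
  rewrite /pair_key; case: ifP => [/eqP -> | _]; first by left; split => //; lia.
  by case: ifP => v_pq; [left; split => //; lia | right].
case: (key_cases a) (key_cases b) => [[a_pq ka] | ->] [[b_pq kb] | ->].
- by rewrite a_pq b_pq in not_pq.
- by have := col_pq a a_pq; lia.
- by have := col_pq b b_pq; lia.
- by lia.
Qed.

Lemma restrict_near_block_edge p q a b :
  col p <= col q <= (col p).+1 -> col a < col b ->
  ~~ ((a \in [:: p; q]) && (b \in [:: p; q])) ->
  restrict a b (near_block p q) = [:: a; b; a; b].
Proof.
move=> bounds lt_ab not_pq.
by rewrite restrict_cat !restrict_key_sort // pair_key_lt // !inE eqxx ?orbT.
Qed.

Lemma restrict_near_block p q : p != q -> restrict p q (near_block p q) = [:: p; q; q; p].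
Proof.
move=> pq; rewrite restrict_cat [X in _ ++ X]restrictC !restrict_key_sort //.
all: by rewrite /pair_key !inE !eqxx ?orbT ?(eq_sym q p) (negbTE pq).
Qed.

End Blocks.

Section ThreeColourable.
Variables (V : finType) (E : rel V) (col : V -> nat).
Hypotheses (E_sym : symmetric E) (col_proper : forall a b, E a b -> col a != col b)
           (col_lt3 : forall v, col v < 3).

Definition block p q := if col q == (col p).+2 then far_block col p q else near_block col p q.

Definition nonedges : seq (V * V) :=
  [seq pq <- enum {: V * V} | [&& pq.1 != pq.2, ~~ E pq.1 pq.2 & col pq.1 <= col pq.2]].

Definition colouring_word :=
  key_sort col ++ flatten [seq block pq.1 pq.2 | pq <- nonedges].

Lemma mem_nonedges p q :
  ((p, q) \in nonedges) = [&& p != q, ~~ E p q & col p <= col q].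
Proof. by rewrite mem_filter mem_enum andbT. Qed.

Lemma restrict_block_edge a b p q : E a b -> col a < col b -> (p, q) \in nonedges ->
  restrict a b (block p q) = [:: a; b; a; b].
Proof.
move=> ab lt_ab; rewrite mem_nonedges => /and3P [pq not_pq le_pq].
have not_both : ~~ ((a \in [:: p; q]) && (b \in [:: p; q])).
  apply: contra not_pq; rewrite !inE => /andP [] /orP [] /eqP ? /orP [] /eqP ?;
    by subst; rewrite ?ltnn in lt_ab; rewrite // E_sym.
rewrite /block; case: eqP => [far | near].
  by apply: restrict_far_block_edge => // v; have := col_lt3 v; have := col_lt3 q; lia.
by apply: restrict_near_block_edge => //; have := col_lt3 q; lia.
Qed.

Lemma has_square_restrict_block p q : (p, q) \in nonedges ->
  has_square (restrict p q (block p q)).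
Proof.
rewrite mem_nonedges => /and3P [pq _ le_pq]; rewrite /block.
case: eqP => [far | _].
  by rewrite restrict_far_block ?far //; exists [::], [:: q; q], p.
by rewrite restrict_near_block //; exists [:: p], [:: p], q.
Qed.

Lemma alternate_edge a b : E a b -> col a < col b -> alternate a b colouring_word.
Proof.
move=> ab lt_ab; rewrite /alternate restrict_cat restrict_key_sort // restrict_flatten -map_comp.
apply: alt_word_pair_blocks; rewrite all_map; apply/allP => -[p q] pq_nonedge /=.
by rewrite restrict_block_edge.
Qed.

Lemma not_alternate_nonedge p q : (p, q) \in nonedges -> ~ alternate p q colouring_word.
Proof.
move=> pq_nonedge; have := pq_nonedge; rewrite mem_nonedges => /andP [pq _].
apply: alt_word_no_square pq _.
rewrite restrict_cat restrict_flatten -map_comp -[flatten _]cats0; apply: has_square_cat.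
apply: has_square_flatten (has_square_restrict_block pq_nonedge).
by apply/mapP; exists (p, q).
Qed.

Theorem three_colourable_word_representable : word_representable E.
Proof.
exists colouring_word; split => [v | a b ab].
  by rewrite mem_cat mem_key_sort.
have alternateC u v : alternate u v colouring_word -> alternate v u colouring_word.
  by rewrite /alternate restrictC; apply: alt_wordC.
split => [E_ab | alt_ab].
  have := col_proper E_ab; rewrite neq_ltn => /orP [lt_ab | lt_ba].
    exact: alternate_edge.
  by apply/alternateC/alternate_edge; rewrite // E_sym.
apply/negPn/negP => not_E_ab.
have [le_ab | lt_ba] := leqP (col a) (col b).
  by apply: (not_alternate_nonedge (p := a) (q := b)); rewrite // mem_nonedges ab not_E_ab.
apply: (not_alternate_nonedge (p := b) (q := a)); last exact: alternateC.
by rewrite mem_nonedges eq_sym ab E_sym not_E_ab ltnW.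
Qed.

End ThreeColourable.

Definition floor_colour (m K i : nat) := (i + K * i %/ m) %% 3.

Lemma floor_colour_neq m K d i j e :
  m %% 3 = 2 -> K %% 3 = 1 -> floor_colour m K d = 1 -> j + m * e = i + d ->
  floor_colour m K i != floor_colour m K j.
Proof.
(* With f i = i + floor(K i / m): f i + f d + carry = f j + e (m + K), where
   carry is 0 or 1 and m + K = 0 (mod 3), so f d = 1 forbids f i = f j. *)
move=> m3 K3 + e_ij; rewrite /floor_colour.
have m_gt0 : 0 < m by lia.
have mK3 : e * (m + K) %% 3 = 0.
  by rewrite -modnMmr (_ : (m + K) %% 3 = 0) ?muln0 //; lia.
have floor_j : (K * i + K * d) %/ m = K * j %/ m + K * e.
  by rewrite -mulnDr -e_ij mulnDr mulnCA [m * _]mulnC divnDMl.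
move: (divnD (K * i) (K * d) m_gt0); rewrite floor_j.
move: (K * i %/ m) (K * d %/ m) (K * j %/ m) (_ <= _) => Fi Fd Fj carry.
by case: carry; lia.
Qed.

Lemma divn_between t m d : t * d <= m < t * d + d -> m %/ d = t.
Proof.
move=> /andP [lo hi]; have d_gt0 : 0 < d by lia.
by apply/eqP; rewrite eqn_leq leq_divRL // -ltnS ltn_divLR //; lia.
Qed.

Lemma exists_multiple_in_window s c T : 0 < s -> c <= T ->
  exists k, T <= c + k * s < T + s.
Proof.
move=> s_gt0 cT; exists ((T - c + s.-1) %/ s).
have := divn_eq (T - c + s.-1) s; have := ltn_pmod (T - c + s.-1) s_gt0; lia.
Qed.

Lemma multiplier_small_jump n x : 5 <= x -> 3 * x < n ->
  exists K, [/\ K %% 6 = 1, K < 2 * n & K * x %/ (2 * n) = 2].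
Proof.
move=> x_ge5 small.
(* K = 6 k + 1 with K x in [4n, 4n + 6x), inside [4n, 6n). *)
have [|| k /andP [lo hi]] := @exists_multiple_in_window (6 * x) x (4 * n); try lia.
have kx : k * 5 <= k * x := leq_mul (leqnn k) x_ge5.
exists (6 * k + 1); split; [lia | lia | apply: divn_between; lia].
Qed.

Lemma multiplier_large_jump n x D : n = 2 * x + D -> 3 <= D <= x ->
  exists K, [/\ K %% 6 = 1, K < 2 * n & K * x %/ (2 * n) %% 3 = 2].
Proof.
move=> -> /andP [D_ge3 D_le].
(* Since 12 x = 3 (2n) - 6 D, K = 12 (k + 1) + 1 gives
   K x = (3 k + 2) (2n) + (5 x + 2 D - 6 (k + 1) D). *)
have [|| [|k] /andP [lo hi]] := @exists_multiple_in_window (6 * D) 0 x.+1; try lia.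
have kD : k * 3 <= k * D := leq_mul (leqnn k) D_ge3.
exists (12 * k + 13); split; [lia | lia |].
by rewrite (@divn_between (3 * k + 2)); lia.
Qed.

Lemma exists_multiplier n x : n %% 3 = 1 -> x %% 3 = 2 -> 2 < x -> 2 * x < n ->
  exists K, [/\ K %% 6 = 1, K < 2 * n & K * x %/ (2 * n) %% 3 = 2].
Proof.
move=> n3 x3 x_gt2 x_small; have [small | large] := ltnP (3 * x) n.
  have [|K [K6 K_lt floor_Kx]] := multiplier_small_jump (_ : 5 <= x) small; first by lia.
  by exists K; rewrite floor_Kx.
by apply: (multiplier_large_jump (D := n - 2 * x)); lia.
Qed.

Lemma floor_colour_jump n x K d : n %% 3 = 1 -> x %% 3 = 2 -> K %% 6 = 1 -> K < 2 * n ->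
  K * x %/ (2 * n) %% 3 = 2 -> (d == 1) || (d == x) || (d == n) ->
  floor_colour (2 * n) K d = 1.
Proof.
move=> n3 x3 K6 K_lt floor_Kx; rewrite /floor_colour.
case/orP => [/orP [] |] /eqP ->.
- by rewrite muln1 divn_small.
- by lia.
- by rewrite mulnC [2 * n]mulnC divnMl; lia.
Qed.

Lemma cdist_sym m a b : cdist m a b = cdist m b a.
Proof. by rewrite /cdist; case: leqP => ab; case: leqP => ba; lia. Qed.

Lemma cdist_shift m a b : a < m -> b < m ->
  exists e, b + m * e = a + cdist m a b \/ a + m * e = b + cdist m a b.
Proof.
move=> a_lt b_lt; rewrite /cdist.
by case: leqP => ab; [case: (leqP (b - a) (m - (b - a))) | case: (leqP (a - b) (m - (a - b)))];
  move=> d_le; [exists 0 | exists 1 | exists 0 | exists 1]; lia.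
Qed.

Lemma C2n_sym n x : symmetric (C2n n x).
Proof. by move=> a b; rewrite /C2n /circulant eq_sym cdist_sym. Qed.

Theorem theorem25 (n x : nat) :
  1 < x < n ->
  n %% 3 = 1 -> x %% 3 = 2 -> 2 < x -> 2 * x < n ->
  word_representable (C2n n x).
Proof.
(* 1 < x < n follows from the other hypotheses. *)
move=> _ n3 x3 x_gt2 x_small.
have [K [K6 K_lt floor_Kx]] := exists_multiplier n3 x3 x_gt2 x_small.
have m3 : (2 * n) %% 3 = 2 by lia.
have K3 : K %% 3 = 1 by lia.
pose col (i : 'I_(2 * n)) := floor_colour (2 * n) K i.
apply: (@three_colourable_word_representable _ _ col (@C2n_sym n x)) => [a b | v].
  case/andP=> _ /(floor_colour_jump n3 x3 K6 K_lt floor_Kx) jump.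
  have [e [shift | shift]] := cdist_shift (ltn_ord a) (ltn_ord b).
    exact: floor_colour_neq m3 K3 jump shift.
  by rewrite eq_sym; apply: floor_colour_neq m3 K3 jump shift.
by rewrite ltn_mod.
Qed.
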